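(* Let $(X,d)$ be a compact metric space and let $f\colon X\to X$ be a continuous map with the limit shadowing property. Then $CR(f)=\Omega(f)=\overline{M(f)}$, and the restriction $f|_{\Omega(f)}\colon\Omega(f)\to\Omega(f)$ has the shadowing property.
   Context: A sequence $(x_i)_{i\ge0}$ in $X$ is a $\delta$-pseudo orbit of $f$ if $d(f(x_i),x_{i+1})\le\delta$ for all $i\ge0$; it is $\epsilon$-shadowed by $x\in X$ if $d(x_i,f^i(x))\le\epsilon$ for all $i\ge0$. $f$ has the shadowing property if for every $\epsilon>0$ there is $\delta>0$ such that every $\delta$-pseudo orbit of $f$ is $\epsilon$-shadowed by some point of $X$. A sequence $(x_i)_{i\ge0}$ is a limit pseudo orbit of $f$ if $\lim_{i\to\infty}d(f(x_i),x_{i+1})=0$; $f$ has the limit shadowing property if for every limit pseudo orbit $(x_i)_{i\ge0}$ there is $y\in X$ with $\lim_{i\to\infty}d(x_i,f^i(y))=0$. A finite sequence $(x_i)_{i=0}^k$ ($k\ge1$) is a $\delta$-chain if $d(f(x_i),x_{i+1})\le\delta$ for $0\le i\le k-1$, and a $\delta$-cycle if moreover $x_0=x_k$. $x$ is chain recurrent if for every $\delta>0$ there is a $\delta$-cycle with $x_0=x_k=x$; $CR(f)$ is the set of chain recurrent points. $x$ is minimal if $f$ restricted to the orbit closure $\overline{\{f^n(x):n\ge0\}}$ is minimal; $M(f)$ is the set of minimal points. $x$ is non-wandering if for every neighborhood $U$ of $x$ there is $n>0$ with $f^n(U)\cap U\ne\emptyset$; $\Omega(f)$ is the set of non-wandering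 points. *)

From Stdlib Require Import Reals List.
Open Scope R_scope.

Section Dyn.
Context {X : Type} (d : X -> X -> R).

Definition is_metric : Prop :=
  (forall x y, 0 <= d x y) /\ (forall x y, d x y = 0 <-> x = y) /\
  (forall x y, d x y = d y x) /\ (forall x y z, d x z <= d x y + d y z).

Definition is_open (U : X -> Prop) : Prop :=
  forall x, U x -> exists r, 0 < r /\ forall y, d x y < r -> U y.

Definition is_closed (A : X -> Prop) : Prop := is_open (fun x => ~ A x).

Definition compact_space : Prop :=
  forall (I : Type) (U : I -> X -> Prop),
    (forall i, is_open (U i)) -> (forall x, exists i, U i x) ->
    exists l : list I, forall x, exists i, In i l /\ U i x.

Definition closure (A : X -> Prop) (x : X) : Prop :=
  forall eps, 0 < eps -> exists y, A y /\ d x y < eps.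

Definition continuous_map (f : X -> X) : Prop :=
  forall x eps, 0 < eps -> exists delta, 0 < delta /\
    forall y, d x y < delta -> d (f x) (f y) < eps.

Variable f : X -> X.

Definition pseudo_orbit (delta : R) (xs : nat -> X) : Prop :=
  forall i, d (f (xs i)) (xs (S i)) <= delta.

Definition shadows (eps : R) (xs : nat -> X) (x : X) : Prop :=
  forall i, d (xs i) (Nat.iter i f x) <= eps.

(* shadowing property of the restriction of f to a subset S
   (subspace with induced metric; pseudo orbits in S, shadowing points in S) *)
Definition shadowing_on (S : X -> Prop) : Prop :=
  forall eps, 0 < eps -> exists delta, 0 < delta /\
    forall xs, (forall i, S (xs i)) -> pseudo_orbit delta xs ->
      exists x, S x /\ shadows eps xs x.

Definition limit_pseudo_orbit (xs : nat -> X) : Prop :=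
  Un_cv (fun i => d (f (xs i)) (xs (S i))) 0.

Definition limit_shadowing : Prop :=
  forall xs, limit_pseudo_orbit xs ->
    exists y, Un_cv (fun i => d (xs i) (Nat.iter i f y)) 0.

Definition chain_recurrent (x : X) : Prop :=
  forall delta, 0 < delta ->
    exists (k : nat) (xs : nat -> X), (1 <= k)%nat /\ xs 0%nat = x /\ xs k = x /\
      forall i, (i < k)%nat -> d (f (xs i)) (xs (S i)) <= delta.

Definition orbit_closure (x : X) : X -> Prop :=
  closure (fun y => exists n, y = Nat.iter n f x).

Definition minimal_on (K : X -> Prop) : Prop :=
  forall A : X -> Prop, (exists y, A y) -> is_closed A ->
    (forall y, A y -> K y) -> (forall y, A y -> A (f y)) ->
    forall y, K y -> A y.

Definition minimal_point (x : X) : Prop := minimal_on (orbit_closure x).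

Definition nonwandering (x : X) : Prop :=
  forall U : X -> Prop, is_open U -> U x ->
    exists (n : nat) (y : X), (0 < n)%nat /\ U y /\ U (Nat.iter n f y).

End Dyn.

(* Limit shadowing implies that periodic pseudo orbits running around delta-cycles
   are eps-shadowed, with delta depending only on eps.  A cycle through a
   non-wandering point x is then shadowed by some z that returns near x at every
   multiple of the period, and a minimal subset of the orbit closure of z contains a
   point near x.  A pseudo orbit in the non-wandering set closes up into a cycle via
   chains running back inside that set; a cluster point, along multiples of the
   period, of a shadow of this cycle is a non-wandering point shadowing an initial
   segment, and compactness passes to the whole pseudo orbit. *)

From Stdlib Require Import Reals Lra Lia List.
From Stdlib Require Import Classical ClassicalEpsilon IndefiniteDescription.
Open Scope R_scope.

Lemma inv_succ_pos (m : nat) : 0 < / (INR m + 1).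
Proof. apply Rinv_0_lt_compat. pose proof (pos_INR m). lra. Qed.

Lemma inv_succ_le (m n : nat) : (m <= n)%nat -> / (INR n + 1) <= / (INR m + 1).
Proof. intros H. apply le_INR in H. pose proof (pos_INR m). apply Rinv_le_contravar; lra. Qed.

Lemma inv_succ_eventually_lt (eps : R) :
  0 < eps -> exists N, forall m, (N <= m)%nat -> / (INR m + 1) < eps.
Proof.
  intros Heps. destruct (INR_unbounded (/ eps)) as [N HN]. exists N. intros m Hm.
  apply Rle_lt_trans with (/ (INR N + 1)); [now apply inv_succ_le|].
  rewrite <- (Rinv_inv eps). apply Rinv_lt_contravar.
  - apply Rmult_lt_0_compat; [now apply Rinv_0_lt_compat|]. pose proof (pos_INR N). lra.
  - lra.
Qed.

Lemma finite_uniform_lower_bound (D : nat -> nat -> R) p :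
  (forall r, (r < p)%nat -> exists e, 0 < e /\ forall j, e <= D r j) ->
  exists e, 0 < e /\ forall r, (r < p)%nat -> forall j, e <= D r j.
Proof.
  induction p as [|p IH]; intros H.
  - exists 1. split; [lra|]. intros r Hr. lia.
  - destruct IH as [e1 [He1 H1]]; [intros r Hr; apply H; lia|].
    destruct (H p ltac:(lia)) as [e2 [He2 H2]].
    exists (Rmin e1 e2). split; [now apply Rmin_glb_lt|].
    intros r Hr j. destruct (Nat.eq_dec r p) as [->|Hne].
    + eapply Rle_trans; [apply Rmin_r|apply H2].
    + eapply Rle_trans; [apply Rmin_l|]. apply H1. lia.
Qed.

Section Metric.
Context {X : Type} (d : X -> X -> R) (Hmet : is_metric d).

Lemma dist_nonneg x y : 0 <= d x y. Proof. apply Hmet. Qed.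
Lemma dist_refl x : d x x = 0. Proof. now apply Hmet. Qed.
Lemma dist_sym x y : d x y = d y x. Proof. apply Hmet. Qed.
Lemma dist_triangle x y z : d x z <= d x y + d y z. Proof. apply Hmet. Qed.

Lemma ball_open c r : is_open d (fun y => d c y < r).
Proof.
  intros x Hx. exists (r - d c x). split; [lra|]. intros y Hy.
  pose proof (dist_triangle c x y). lra.
Qed.

Lemma closure_is_closed (A : X -> Prop) : is_closed d (closure d A).
Proof.
  intros x Hx. apply not_all_ex_not in Hx as [eps Hx].
  apply imply_to_and in Hx as [Heps Hx].
  exists (eps / 2). split; [lra|]. intros y Hxy Hy.
  destruct (Hy (eps / 2)) as [z [Hz Hyz]]; [lra|].
  apply Hx. exists z. split; [exact Hz|]. pose proof (dist_triangle x y z). lra.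
Qed.

Lemma closure_incl_closed (A B : X -> Prop) x :
  is_closed d B -> (forall y, A y -> B y) -> closure d A x -> B x.
Proof.
  intros HB HAB Hx. apply NNPP. intro Hnx. destruct (HB x Hnx) as [r [Hr Hball]].
  destruct (Hx r Hr) as [y [Hy Hxy]]. exact (Hball y Hxy (HAB y Hy)).
Qed.

Lemma closure_mono (A B : X -> Prop) x :
  (forall y, A y -> B y) -> closure d A x -> closure d B x.
Proof.
  intros HAB Hx eps Heps. destruct (Hx eps Heps) as [y [Hy Hxy]].
  exists y. split; [apply HAB, Hy|exact Hxy].
Qed.

Lemma closed_dist_le_comp (g : X -> X) a eps :
  continuous_map d g -> is_closed d (fun y => d a (g y) <= eps).
Proof.
  intros Hg y Hy. apply Rnot_le_lt in Hy.
  destruct (Hg y (d a (g y) - eps)) as [r [Hr Hball]]; [lra|].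
  exists r. split; [exact Hr|]. intros z Hyz Hz. specialize (Hball z Hyz).
  pose proof (dist_triangle a (g z) (g y)). rewrite (dist_sym (g z)) in H. lra.
Qed.

Lemma closed_intersection (K : nat -> X -> Prop) :
  (forall m, is_closed d (K m)) -> is_closed d (fun y => forall m, K m y).
Proof.
  intros HK x Hx. apply not_all_ex_not in Hx as [m Hm].
  destruct (HK m x Hm) as [r [Hr Hball]].
  exists r. split; [exact Hr|]. intros y Hxy Hy. exact (Hball y Hxy (Hy m)).
Qed.

Definition cluster_point (s : nat -> X) (w : X) : Prop :=
  forall eps, 0 < eps -> forall N, exists n, (N <= n)%nat /\ d (s n) w < eps.

Lemma cluster_point_closed (A : X -> Prop) s w N :
  is_closed d A -> cluster_point s w -> (forall n, (N <= n)%nat -> A (s n)) -> A w.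
Proof.
  intros HA Hw Hs. apply NNPP. intro Hnw. destruct (HA w Hnw) as [r [Hr Hball]].
  destruct (Hw r Hr N) as [n [Hn Hd]]. rewrite dist_sym in Hd.
  exact (Hball _ Hd (Hs n Hn)).
Qed.

Lemma cluster_point_subseq s w : cluster_point s w ->
  exists phi : nat -> nat, forall k, (k <= phi k)%nat /\ d (s (phi k)) w < / (INR k + 1).
Proof.
  intros Hw. apply (functional_choice (fun k n => (k <= n)%nat /\ d (s n) w < / (INR k + 1))).
  intro k. exact (Hw _ (inv_succ_pos k) k).
Qed.

Section Compact.
Hypothesis Hcpt : compact_space d.

(* A point that is not a cluster point has a ball eventually avoided by [s];
   finitely many such balls cover [X], so [s] would eventually avoid all of [X]. *)
Lemma compact_cluster_point (s : nat -> X) : exists w, cluster_point s w.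
Proof.
  apply NNPP. intro Hno.
  assert (Hfar : forall w, exists rN : R * nat, 0 < fst rN /\
            forall n, (snd rN <= n)%nat -> fst rN <= d (s n) w).
  { intro w. apply NNPP. intro Hw. apply Hno. exists w. intros eps Heps N.
    apply NNPP. intro Hn. apply Hw. exists (eps, N). split; [exact Heps|].
    intros n HNn. apply Rnot_lt_le. intro Hlt. apply Hn. now exists n. }
  apply functional_choice in Hfar as [g Hg].
  destruct (Hcpt X (fun w y => d w y < fst (g w))) as [l Hl].
  - intro w. apply ball_open.
  - intro x. exists x. rewrite dist_refl. apply Hg.
  - set (M := fold_right (fun w acc => Nat.max (snd (g w)) acc) 0%nat l).
    assert (HM : forall w, In w l -> (snd (g w) <= M)%nat).
    { unfold M. clear. induction l as [|a l IH]; simpl; intros w Hw; [contradiction|].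
      destruct Hw as [<-|Hw]; [lia|]. specialize (IH w Hw). lia. }
    destruct (Hl (s M)) as [w [Hin Hw]].
    pose proof (proj2 (Hg w) M (HM w Hin)). rewrite dist_sym in Hw. lra.
Qed.

Lemma nested_closed_nonempty (K : nat -> X -> Prop) :
  (forall m, is_closed d (K m)) -> (forall m, exists y, K m y) ->
  (forall m y, K (S m) y -> K m y) -> exists y, forall m, K m y.
Proof.
  intros Hcl Hne Hdec. apply functional_choice in Hne as [a Ha].
  destruct (compact_cluster_point a) as [w Hw]. exists w. intro m.
  apply (cluster_point_closed (K m) a w m (Hcl m) Hw). intros n Hn.
  assert (Hmono : forall k y, K (k + m)%nat y -> K m y).
  { induction k; intros y Hy; [exact Hy|]. apply IHk, Hdec, Hy. }
  apply Hmono with (n - m)%nat. replace (n - m + m)%nat with n by lia. apply Ha.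
Qed.

Lemma uniform_continuity (g : X -> X) : continuous_map d g ->
  forall eps, 0 < eps -> exists rho, 0 < rho /\
    forall a b, d a b < rho -> d (g a) (g b) < eps.
Proof.
  intros Hg eps Heps. apply NNPP. intro Hno.
  assert (Hbad : forall n : nat, exists ab : X * X, d (fst ab) (snd ab) < / (INR n + 1) /\
             eps <= d (g (fst ab)) (g (snd ab))).
  { intro n. apply NNPP. intro Hn. apply Hno. exists (/ (INR n + 1)).
    split; [apply inv_succ_pos|]. intros a b Hab. apply Rnot_le_lt. intro Hle.
    apply Hn. now exists (a, b). }
  apply functional_choice in Hbad as [ab Hab].
  destruct (compact_cluster_point (fun n => fst (ab n))) as [w Hw].
  destruct (Hg w (eps / 2)) as [r [Hr Hwr]]; [lra|].
  destruct (inv_succ_eventually_lt (r / 2)) as [N HN]; [lra|].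
  destruct (Hw (r / 2) ltac:(lra) N) as [n [Hn Hd]].
  destruct (Hab n) as [Hclose Hfar]. specialize (HN n Hn).
  rewrite dist_sym in Hd.
  assert (H1 : d (g w) (g (fst (ab n))) < eps / 2) by (apply Hwr; lra).
  assert (H2 : d (g w) (g (snd (ab n))) < eps / 2).
  { apply Hwr. pose proof (dist_triangle w (fst (ab n)) (snd (ab n))). lra. }
  pose proof (dist_triangle (g (fst (ab n))) (g w) (g (snd (ab n)))).
  rewrite (dist_sym _ (g w)) in H. lra.
Qed.

End Compact.
End Metric.

(** * Concatenating finite blocks *)

Section Concat.
Context {X : Type} (L : nat -> nat) (b : nat -> nat -> X).

Fixpoint block_start (k : nat) : nat :=
  match k with O => O | S k => (block_start k + L k)%nat end.

(* [block_pos i = (k, o)] when index [i] is offset [o] of block [k]. *)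
Fixpoint block_pos (i : nat) : nat * nat :=
  match i with
  | O => (O, O)
  | S i => let '(k, o) := block_pos i in
           if Nat.ltb (S o) (L k) then (k, S o) else (S k, O)
  end.

Definition concat_blocks (i : nat) : X := b (fst (block_pos i)) (snd (block_pos i)).

Hypothesis HL : forall k, (1 <= L k)%nat.

Lemma block_pos_succ i : block_pos (S i) =
  let '(k, o) := block_pos i in if Nat.ltb (S o) (L k) then (k, S o) else (S k, O).
Proof. reflexivity. Qed.

Lemma block_pos_spec i :
  (snd (block_pos i) < L (fst (block_pos i)))%nat /\
  i = (block_start (fst (block_pos i)) + snd (block_pos i))%nat.
Proof.
  induction i as [|i [IH1 IH2]]; simpl.
  - specialize (HL 0). lia.
  - destruct (block_pos i) as [k o]. simpl in *.
    destruct (Nat.ltb (S o) (L k)) eqn:E.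
    + apply Nat.ltb_lt in E. simpl. lia.
    + apply Nat.ltb_ge in E. simpl. specialize (HL (S k)). lia.
Qed.

Lemma block_pos_start k o : (o < L k)%nat -> block_pos (block_start k + o) = (k, o).
Proof.
  revert o. induction k as [|k IHk]; intros o Ho.
  - induction o as [|o IHo]; [reflexivity|].
    simpl in *. rewrite IHo by lia.
    destruct (Nat.ltb (S o) (L 0)) eqn:E; [reflexivity|]. apply Nat.ltb_ge in E. lia.
  - induction o as [|o IHo].
    + replace (block_start (S k) + 0)%nat with (S (block_start k + (L k - 1)))
        by (simpl; specialize (HL k); lia).
      simpl. rewrite IHk by (specialize (HL k); lia).
      destruct (Nat.ltb (S (L k - 1)) (L k)) eqn:E; [|reflexivity].
      apply Nat.ltb_lt in E. specialize (HL k). lia.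
    + replace (block_start (S k) + S o)%nat with (S (block_start (S k) + o)) by lia.
      rewrite block_pos_succ, IHo by lia.
      destruct (Nat.ltb (S o) (L (S k))) eqn:E; [reflexivity|]. apply Nat.ltb_ge in E. lia.
Qed.

Lemma concat_blocks_at k o : (o < L k)%nat -> concat_blocks (block_start k + o) = b k o.
Proof. intro Ho. unfold concat_blocks. now rewrite block_pos_start. Qed.

Lemma block_start_ge k : (k <= block_start k)%nat.
Proof. induction k; simpl; [lia|]. specialize (HL k). lia. Qed.

Lemma block_start_mono k1 k2 : (k1 <= k2)%nat -> (block_start k1 <= block_start k2)%nat.
Proof. induction 1; simpl; lia. Qed.

Lemma block_pos_ge K i : (block_start K <= i)%nat -> (K <= fst (block_pos i))%nat.
Proof.
  intros Hi. destruct (block_pos_spec i) as [H1 H2].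
  destruct (Nat.le_gt_cases K (fst (block_pos i))) as [|Hlt]; [assumption|].
  pose proof (block_start_mono (S (fst (block_pos i))) K ltac:(lia)). simpl in H. lia.
Qed.

Variables (d : X -> X -> R) (f : X -> X) (E : nat -> R).
Hypothesis Hinside : forall k o, (S o < L k)%nat -> d (f (b k o)) (b k (S o)) <= E k.
Hypothesis Hjunction : forall k, d (f (b k (L k - 1))) (b (S k) 0) <= E k.

Lemma concat_blocks_step i :
  d (f (concat_blocks i)) (concat_blocks (S i)) <= E (fst (block_pos i)).
Proof.
  unfold concat_blocks. destruct (block_pos_spec i) as [H1 _]. rewrite block_pos_succ.
  destruct (block_pos i) as [k o]. simpl in *.
  destruct (Nat.ltb (S o) (L k)) eqn:Eq.
  - apply Nat.ltb_lt in Eq. now apply Hinside.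
  - apply Nat.ltb_ge in Eq. replace o with (L k - 1)%nat by lia. apply Hjunction.
Qed.

Lemma concat_blocks_limit_pseudo_orbit :
  (forall x y, 0 <= d x y) ->
  (forall eps, 0 < eps -> exists K, forall k, (K <= k)%nat -> E k < eps) ->
  limit_pseudo_orbit d f concat_blocks.
Proof.
  intros Hpos HE eps Heps. destruct (HE eps Heps) as [K HK]. exists (block_start K).
  intros n Hn. unfold Rdist. rewrite Rminus_0_r, Rabs_pos_eq by apply Hpos.
  eapply Rle_lt_trans; [apply concat_blocks_step|]. apply HK. now apply block_pos_ge.
Qed.

End Concat.

Section Dynamics.
Context {X : Type} (d : X -> X -> R) (f : X -> X).
Hypothesis Hmet : is_metric d.
Hypothesis Hcpt : compact_space d.
Hypothesis Hcont : continuous_map d f.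
Hypothesis Hls : limit_shadowing d f.

Definition chain (delta : R) (c : nat -> X) (k : nat) : Prop :=
  forall i, (i < k)%nat -> d (f (c i)) (c (S i)) <= delta.

Definition chain_reach (delta : R) (a b : X) : Prop :=
  exists k c, c 0%nat = a /\ c k = b /\ chain delta c k.

Definition append (c1 : nat -> X) (k1 : nat) (c2 : nat -> X) (i : nat) : X :=
  if Nat.leb i k1 then c1 i else c2 (i - k1)%nat.

Lemma append_left c1 k1 c2 i : (i <= k1)%nat -> append c1 k1 c2 i = c1 i.
Proof. intro H. unfold append. apply Nat.leb_le in H. now rewrite H. Qed.

Lemma append_right c1 k1 c2 i :
  c1 k1 = c2 0%nat -> (k1 <= i)%nat -> append c1 k1 c2 i = c2 (i - k1)%nat.
Proof.
  intros H12 H. unfold append. destruct (Nat.leb i k1) eqn:E; [|reflexivity].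
  apply Nat.leb_le in E. replace i with k1 by lia. now rewrite Nat.sub_diag.
Qed.

Lemma chain_append delta c1 k1 c2 k2 :
  chain delta c1 k1 -> chain delta c2 k2 -> c1 k1 = c2 0%nat ->
  chain delta (append c1 k1 c2) (k1 + k2).
Proof.
  intros H1 H2 H12 i Hi. destruct (Nat.lt_ge_cases i k1).
  - rewrite !append_left by lia. now apply H1.
  - rewrite !append_right by (assumption || lia).
    replace (S i - k1)%nat with (S (i - k1)) by lia. apply H2. lia.
Qed.

Lemma chain_reach_refl delta a : chain_reach delta a a.
Proof. exists 0%nat, (fun _ => a). repeat split. intros i Hi. lia. Qed.

Lemma chain_reach_trans delta a b c :
  chain_reach delta a b -> chain_reach delta b c -> chain_reach delta a c.
Proof.
  intros [k1 [c1 [A1 [B1 C1]]]] [k2 [c2 [A2 [B2 C2]]]].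
  exists (k1 + k2)%nat, (append c1 k1 c2). split; [|split].
  - now rewrite append_left by lia.
  - rewrite append_right by (congruence || lia). now replace (k1 + k2 - k1)%nat with k2 by lia.
  - apply chain_append; [exact C1|exact C2|congruence].
Qed.

Lemma chain_recurrent_long_cycle x delta : chain_recurrent d f x -> 0 < delta ->
  exists k c, (2 <= k)%nat /\ c 0%nat = x /\ c k = x /\ chain delta c k.
Proof.
  intros Hx Hdelta. destruct (Hx delta Hdelta) as [k [c [Hk [H0 [Hk' Hc]]]]].
  exists (k + k)%nat, (append c k c). split; [lia|]. split; [|split].
  - now rewrite append_left by lia.
  - rewrite append_right by (congruence || lia). now replace (k + k - k)%nat with k by lia.
  - apply chain_append; [exact Hc|exact Hc|congruence].
Qed.

Definition periodic (c : nat -> X) (p : nat) (i : nat) : X := c (i mod p).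

Lemma periodic_at c p j o : (o < p)%nat -> periodic c p (j * p + o) = c o.
Proof. intros Ho. unfold periodic. f_equal. symmetry. apply Nat.mod_unique with j; lia. Qed.

Lemma periodic_pseudo_orbit delta c p : (1 <= p)%nat -> c p = c 0%nat -> chain delta c p ->
  pseudo_orbit d f delta (periodic c p).
Proof.
  intros Hp Hper Hc i. unfold periodic.
  pose proof (Nat.div_mod_eq i p). pose proof (Nat.mod_upper_bound i p ltac:(lia)).
  destruct (Nat.eq_dec (S (i mod p)) p) as [Hr|Hr].
  - replace (S i mod p)%nat with 0%nat by (apply Nat.mod_unique with (S (i / p)); lia).
    rewrite <- Hper. rewrite <- Hr at 2. apply Hc. lia.
  - replace (S i mod p)%nat with (S (i mod p)) by (apply Nat.mod_unique with (i / p)%nat; lia).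
    apply Hc. lia.
Qed.

Lemma continuous_iter n : continuous_map d (Nat.iter n f).
Proof.
  induction n as [|n IH]; intros x eps Heps.
  - exists eps. now split.
  - destruct (Hcont (Nat.iter n f x) eps Heps) as [r1 [Hr1 H1]].
    destruct (IH x r1 Hr1) as [r2 [Hr2 H2]].
    exists r2. split; [exact Hr2|]. intros y Hy. apply H1, H2, Hy.
Qed.

Lemma nonwandering_chain_recurrent x : nonwandering d f x -> chain_recurrent d f x.
Proof.
  intros Hnw delta Hdelta.
  destruct (Hcont x (delta / 2)) as [rho [Hrho Hfx]]; [lra|].
  set (r := Rmin rho (delta / 2)).
  assert (Hr : 0 < r /\ r <= rho /\ r <= delta / 2).
  { unfold r. split; [apply Rmin_glb_lt; lra|split; [apply Rmin_l|apply Rmin_r]]. }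
  destruct (Hnw (fun y => d x y < r) (ball_open d Hmet x r)) as [n [y [Hn [Hy Hny]]]].
  { rewrite (dist_refl d Hmet). lra. }
  set (c i := if ((i =? 0) || (i =? n))%bool then x else Nat.iter i f y).
  assert (Hleft : forall i, (i < n)%nat -> d (f (c i)) (Nat.iter (S i) f y) < delta / 2).
  { intros i Hi. unfold c. destruct (i =? 0) eqn:E0.
    - apply Nat.eqb_eq in E0. subst i. apply Hfx. lra.
    - replace (i =? n) with false by (symmetry; apply Nat.eqb_neq; lia).
      simpl. rewrite (dist_refl d Hmet). lra. }
  assert (Hright : forall i, (i < n)%nat -> d (Nat.iter (S i) f y) (c (S i)) < delta / 2).
  { intros i Hi. unfold c. simpl (S i =? 0). destruct (S i =? n) eqn:En; cbn [orb].
    - apply Nat.eqb_eq in En. rewrite En, (dist_sym d Hmet). lra.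
    - rewrite (dist_refl d Hmet). lra. }
  exists n, c. split; [lia|]. split; [reflexivity|]. split.
  - unfold c. now rewrite Nat.eqb_refl, Bool.orb_true_r.
  - intros i Hi. pose proof (dist_triangle d Hmet (f (c i)) (Nat.iter (S i) f y) (c (S i))).
    specialize (Hleft i Hi). specialize (Hright i Hi). lra.
Qed.

Lemma limit_shadowing_concat (L : nat -> nat) (b : nat -> nat -> X) (E : nat -> R) :
  (forall k, (1 <= L k)%nat) ->
  (forall k o, (S o < L k)%nat -> d (f (b k o)) (b k (S o)) <= E k) ->
  (forall k, d (f (b k (L k - 1)%nat)) (b (S k) 0%nat) <= E k) ->
  (forall eps, 0 < eps -> exists K, forall k, (K <= k)%nat -> E k < eps) ->
  forall eps, 0 < eps -> exists y K, forall k o, (K <= k)%nat -> (o < L k)%nat ->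
    d (b k o) (Nat.iter (block_start L k + o) f y) < eps.
Proof.
  intros HL Hin Hjun HE eps Heps.
  destruct (Hls _ (concat_blocks_limit_pseudo_orbit L b HL d f E Hin Hjun
                     (dist_nonneg d Hmet) HE)) as [y Hy].
  destruct (Hy eps Heps) as [K HK]. exists y, K. intros k o Hk Ho.
  rewrite <- (concat_blocks_at L b HL k o Ho).
  specialize (HK (block_start L k + o)%nat ltac:(pose proof (block_start_ge L HL k); lia)).
  unfold Rdist in HK. now rewrite Rminus_0_r, Rabs_pos_eq in HK by apply (dist_nonneg d Hmet).
Qed.

(* Concatenating [1/(k+1)]-cycles through [x] gives a limit pseudo orbit; a point
   shadowing it returns near [x] at the start of two consecutive cycles. *)
Lemma chain_recurrent_nonwandering x : chain_recurrent d f x -> nonwandering d f x.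
Proof.
  intros Hcr U HU Ux. destruct (HU x Ux) as [r [Hr Hball]].
  assert (Hcyc : forall k : nat, exists pc : nat * (nat -> X), (1 <= fst pc)%nat /\
            snd pc 0%nat = x /\ snd pc (fst pc) = x /\ chain (/ (INR k + 1)) (snd pc) (fst pc)).
  { intro k. destruct (Hcr _ (inv_succ_pos k)) as [p [c Hc]]. now exists (p, c). }
  apply functional_choice in Hcyc as [cyc Hcyc].
  set (L k := fst (cyc k)). set (b k := snd (cyc k)).
  assert (Hstart : forall k, b k 0%nat = x) by apply Hcyc.
  destruct (limit_shadowing_concat L b (fun k => / (INR k + 1))) with (eps := r)
    as [y [K HK]]; [apply Hcyc| | |exact inv_succ_eventually_lt|exact Hr|].
  - intros k o Ho. apply (Hcyc k). unfold L in Ho. lia.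
  - intro k. destruct (Hcyc k) as [HLk [_ [Hend Hch]]].
    rewrite Hstart, <- Hend. specialize (Hch (L k - 1)%nat ltac:(unfold L; lia)).
    now replace (S (L k - 1)) with (L k) in Hch by (unfold L; lia).
  - exists (L K), (Nat.iter (block_start L K) f y). split; [apply Hcyc|]. split.
    + apply Hball. rewrite <- (Hstart K), <- (Nat.add_0_r (block_start L K)). apply HK; [lia|apply Hcyc].
    + apply Hball. rewrite <- (Hstart (S K)), <- Nat.iter_add, Nat.add_comm.
      rewrite <- (Nat.add_0_r (block_start L K + L K)).
      apply HK with (k := S K); [lia|apply Hcyc].
Qed.


Lemma closure_nonwandering x : closure d (nonwandering d f) x -> nonwandering d f x.
Proof.
  intros Hx U HU Ux. destruct (HU x Ux) as [r [Hr Hball]].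
  destruct (Hx r Hr) as [y [Hy Hxy]]. exact (Hy U HU (Hball y Hxy)).
Qed.

(** * Minimal sets *)

Definition subset (A B : X -> Prop) : Prop := forall y, A y -> B y.

Definition avoids (A B : X -> Prop) : Prop := forall y, A y -> ~ B y.

Definition nonempty_closed_invariant (A : X -> Prop) : Prop :=
  (exists y, A y) /\ is_closed d A /\ (forall y, A y -> A (f y)).

Lemma invariant_iter (A : X -> Prop) n y :
  (forall y, A y -> A (f y)) -> A y -> A (Nat.iter n f y).
Proof. intros Hinv Hy. induction n; simpl; auto. Qed.

Definition shrink (K B : X -> Prop) : X -> Prop :=
  epsilon (inhabits K) (fun A => nonempty_closed_invariant A /\ subset A K /\
    ((exists A', nonempty_closed_invariant A' /\ subset A' K /\ avoids A' B) -> avoids A B)).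

Lemma shrink_spec K B : nonempty_closed_invariant K ->
  nonempty_closed_invariant (shrink K B) /\ subset (shrink K B) K /\
  ((exists A, nonempty_closed_invariant A /\ subset A K /\ avoids A B) ->
   avoids (shrink K B) B).
Proof.
  intros HK. unfold shrink. apply epsilon_spec.
  destruct (classic (exists A, nonempty_closed_invariant A /\ subset A K /\ avoids A B))
    as [[A HA]|Hno].
  - exists A. tauto.
  - exists K. split; [exact HK|]. split; [now intros y Hy|]. intro H. contradiction.
Qed.

Fixpoint shrink_balls (r : R) (K : X -> Prop) (l : list X) : X -> Prop :=
  match l with
  | nil => K
  | c :: l => shrink_balls r (shrink K (fun y => d c y < r)) l
  end.

Lemma shrink_balls_spec r l : forall K, nonempty_closed_invariant K ->
  nonempty_closed_invariant (shrink_balls r K l) /\ subset (shrink_balls r K l) K.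
Proof.
  induction l as [|c l IH]; intros K HK; simpl.
  - split; [exact HK|now intros y Hy].
  - destruct (shrink_spec K (fun y => d c y < r) HK) as [H1 [H2 _]].
    destruct (IH _ H1) as [H3 H4]. split; [exact H3|]. intros y Hy. apply H2, H4, Hy.
Qed.

Lemma shrink_balls_avoids r l : forall K c A, In c l ->
  nonempty_closed_invariant K -> nonempty_closed_invariant A ->
  subset A (shrink_balls r K l) -> avoids A (fun y => d c y < r) ->
  avoids (shrink_balls r K l) (fun y => d c y < r).
Proof.
  induction l as [|c0 l IH]; intros K c A Hin HK HA HAsub HAavoid; simpl in *; [contradiction|].
  destruct (shrink_spec K (fun y => d c0 y < r) HK) as [H1 [H2 H3]].
  destruct (shrink_balls_spec r l _ H1) as [_ H4].
  destruct Hin as [<-|Hin]; [|exact (IH _ c A Hin H1 HA HAsub HAavoid)].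
  intros y Hy. apply H3; [|apply H4, Hy].
  exists A. split; [exact HA|]. split; [|exact HAavoid]. intros z Hz. apply H2, H4, HAsub, Hz.
Qed.

Fixpoint minimal_approx (nets : nat -> list X) (K : X -> Prop) (m : nat) : X -> Prop :=
  match m with
  | O => K
  | S m => shrink_balls (/ (INR m + 1)) (minimal_approx nets K m) (nets m)
  end.

(* At stage [m], for every point [c] of a [1/(m+1)]-net we pass to a nonempty closed
   invariant subset avoiding the ball around [c], whenever there is one.  A nonempty
   closed invariant [A] inside the intersection missing a point [y] misses a ball
   around [y], hence a whole net ball containing [y]: that ball was removed. *)
Lemma exists_minimal_subset K : nonempty_closed_invariant K ->
  exists M, nonempty_closed_invariant M /\ subset M K /\
    forall A, nonempty_closed_invariant A -> subset A M -> subset M A.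
Proof.
  intro HK.
  assert (Hnets : forall m : nat, exists l : list X,
             forall y, exists c, In c l /\ d c y < / (INR m + 1)).
  { intro m. apply (Hcpt X (fun c y => d c y < / (INR m + 1))).
    - intro c. apply (ball_open d Hmet).
    - intro x. exists x. rewrite (dist_refl d Hmet). apply inv_succ_pos. }
  apply functional_choice in Hnets as [nets Hnets].
  set (Ks := minimal_approx nets K).
  assert (Hnci : forall m, nonempty_closed_invariant (Ks m)).
  { induction m as [|m IH]; [exact HK|]. apply shrink_balls_spec, IH. }
  exists (fun y => forall m, Ks m y). split; [split; [|split]|split].
  - apply (nested_closed_nonempty d Hmet Hcpt Ks); intro m; [apply Hnci|apply Hnci|].
    apply shrink_balls_spec, Hnci.
  - apply (closed_intersection d Ks). intro m. apply Hnci.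
  - intros y Hy m. apply Hnci, Hy.
  - intros y Hy. exact (Hy 0%nat).
  - intros A HA HAsub y Hy. apply NNPP. intro HnA.
    destruct (proj1 (proj2 HA) y HnA) as [r [Hr Hball]].
    destruct (inv_succ_eventually_lt (r / 2)) as [m Hm]; [lra|]. specialize (Hm m (le_n m)).
    destruct (Hnets m y) as [c [Hc Hcy]].
    apply (shrink_balls_avoids (/ (INR m + 1)) (nets m) (Ks m) c A Hc (Hnci m) HA)
      with (y := y); [intros z Hz; exact (HAsub z Hz (S m))| |exact (Hy (S m))|exact Hcy].
    intros z Hz Hcz. apply (Hball z); [|exact Hz].
    pose proof (dist_triangle d Hmet y c z). rewrite (dist_sym d Hmet y c) in H. lra.
Qed.

Lemma orbit_closure_iter z n : orbit_closure d f z (Nat.iter n f z).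
Proof. intros eps Heps. exists (Nat.iter n f z). split; [now exists n|]. now rewrite (dist_refl d Hmet). Qed.

Lemma orbit_closure_nonempty_closed_invariant z :
  nonempty_closed_invariant (orbit_closure d f z).
Proof.
  split; [exists z; exact (orbit_closure_iter z 0)|split; [apply (closure_is_closed d Hmet)|]].
  intros y Hy eps Heps. destruct (Hcont y eps Heps) as [r [Hr Hyr]].
  destruct (Hy r Hr) as [w [[n ->] Hw]]. exists (Nat.iter (S n) f z).
  split; [now exists (S n)|]. now apply Hyr.
Qed.

Lemma minimal_set_minimal_point M v : nonempty_closed_invariant M ->
  (forall A, nonempty_closed_invariant A -> subset A M -> subset M A) -> M v ->
  minimal_point d f v.
Proof.
  intros HM Hmin Hv A HAne HAcl HAsub HAinv y Hy.
  assert (Horb : subset (orbit_closure d f v) M).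
  { intros t Ht. eapply (closure_incl_closed d); [exact (proj1 (proj2 HM))| |exact Ht].
    intros s [n ->]. apply invariant_iter; [apply HM|exact Hv]. }
  apply (Hmin A); [split; [exact HAne|split; assumption]| |apply Horb, Hy].
  intros t Ht. apply Horb, HAsub, Ht.
Qed.

Lemma minimal_point_nonwandering x : minimal_point d f x -> nonwandering d f x.
Proof.
  intros Hm U HU Ux. destruct (HU x Ux) as [r [Hr Hball]].
  destruct (orbit_closure_nonempty_closed_invariant (f x)) as [Hne [Hcl Hinv]].
  assert (Hx : orbit_closure d f (f x) x).
  { apply (Hm _ Hne Hcl); [|exact Hinv|exact (orbit_closure_iter x 0)].
    intros y Hy. eapply (closure_incl_closed d); [apply (closure_is_closed d Hmet)| |exact Hy].
    intros t [n ->]. rewrite <- Nat.iter_succ_r. apply orbit_closure_iter. }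
  destruct (Hx r Hr) as [w [[n ->] Hw]].
  exists (S n), x. split; [lia|]. split; [exact Ux|]. rewrite Nat.iter_succ_r. now apply Hball.
Qed.

(** * Shadowing of cycles *)

Lemma shadows_of_finite_shadows (S : X -> Prop) eps xs :
  (forall x, closure d S x -> S x) ->
  (forall N, exists z, S z /\ forall i, (i <= N)%nat -> d (xs i) (Nat.iter i f z) <= eps) ->
  exists z, S z /\ shadows d f eps xs z.
Proof.
  intros HS HN. apply functional_choice in HN as [zs Hzs].
  destruct (compact_cluster_point d Hmet Hcpt zs) as [w Hw]. exists w. split.
  - apply HS. intros e He. destruct (Hw e He 0%nat) as [n [_ Hn]].
    exists (zs n). split; [apply Hzs|]. now rewrite (dist_sym d Hmet).
  - intro i.
    apply (cluster_point_closed d Hmet _ zs w i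
             (closed_dist_le_comp d Hmet _ _ _ (continuous_iter i)) Hw).
    intros n Hn. now apply Hzs.
Qed.

Definition unshadowed_cycle (delta eps : R) (c : nat -> X) (p N : nat) : Prop :=
  (1 <= p)%nat /\ c p = c 0%nat /\ chain delta c p /\
  forall z, exists i, (i <= N)%nat /\ eps < d (periodic c p i) (Nat.iter i f z).

(* Pass to cycles whose base points converge to some [q] and run through each
   unshadowed cycle [N + 1] times: this is a limit pseudo orbit, and a point shadowing
   it at the start of a late block shadows the first [N] steps of that cycle. *)
Lemma unshadowed_cycles_absurd eps (c : nat -> nat -> X) (p N : nat -> nat) :
  0 < eps -> ~ (forall m, unshadowed_cycle (/ (INR m + 1)) eps (c m) (p m) (N m)).
Proof.
  intros Heps Hbad.
  destruct (compact_cluster_point d Hmet Hcpt (fun m => c m 0%nat)) as [q Hq].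
  destruct (cluster_point_subseq d _ _ Hq) as [phi Hphi].
  set (L k := (S (N (phi k)) * p (phi k))%nat).
  set (b k := periodic (c (phi k)) (p (phi k))).
  assert (Hp : forall m, (1 <= p m)%nat) by apply Hbad.
  assert (HL : forall k, (1 <= L k)%nat) by (intro k; unfold L; specialize (Hp (phi k)); nia).
  assert (Hpo : forall k, pseudo_orbit d f (/ (INR k + 1)) (b k)).
  { intros k i. destruct (Hbad (phi k)) as [Hp' [Hper [Hch _]]].
    eapply Rle_trans; [exact (periodic_pseudo_orbit _ _ _ Hp' Hper Hch i)|].
    apply inv_succ_le, Hphi. }
  assert (Hbase : forall k j, b k (j * p (phi k))%nat = c (phi k) 0%nat).
  { intros k j. rewrite <- (Nat.add_0_r (j * _)). apply periodic_at, Hp. }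
  destruct (limit_shadowing_concat L b (fun k => 3 * / (INR k + 1))) with (eps := eps)
    as [y [K HK]]; [exact HL| | | |exact Heps|].
  - intros k o _. pose proof (Hpo k o). pose proof (inv_succ_pos k). lra.
  - intro k. pose proof (Hpo k (L k - 1)%nat) as Hend.
    replace (S (L k - 1)) with (L k) in Hend by (specialize (HL k); lia).
    unfold L in Hend at 2. rewrite Hbase in Hend.
    replace (b (S k) 0%nat) with (c (phi (S k)) 0%nat) by (symmetry; exact (Hbase (S k) 0%nat)).
    pose proof (proj2 (Hphi k)) as Hk. pose proof (proj2 (Hphi (S k))) as HSk.
    pose proof (inv_succ_le k (S k) ltac:(lia)).
    pose proof (dist_triangle d Hmet (f (b k (L k - 1)%nat)) (c (phi k) 0%nat) q).
    pose proof (dist_triangle d Hmet (f (b k (L k - 1)%nat)) q (c (phi (S k)) 0%nat)).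
    rewrite (dist_sym d Hmet q) in H1. lra.
  - intros e He. destruct (inv_succ_eventually_lt (e / 3)) as [K HK]; [lra|].
    exists K. intros k Hk. specialize (HK k Hk). lra.
  - destruct (Hbad (phi K)) as [_ [_ [_ Hfar]]].
    destruct (Hfar (Nat.iter (block_start L K) f y)) as [i [Hi Hd]].
    specialize (HK K i (le_n K) ltac:(unfold L; specialize (Hp (phi K)); nia)).
    rewrite Nat.add_comm, Nat.iter_add in HK. unfold b in HK. lra.
Qed.

Lemma cycle_shadowing eps : 0 < eps -> exists delta, 0 < delta /\
  forall c p, (1 <= p)%nat -> c p = c 0%nat -> chain delta c p ->
    exists z, shadows d f eps (periodic c p) z.
Proof.
  intros Heps. apply NNPP. intro Hno.
  assert (Hbad : forall m : nat, exists cpN : (nat -> X) * nat * nat,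
    unshadowed_cycle (/ (INR m + 1)) eps (fst (fst cpN)) (snd (fst cpN)) (snd cpN)).
  { intro m. apply NNPP. intro Hm. apply Hno. exists (/ (INR m + 1)).
    split; [apply inv_succ_pos|]. intros c p Hp Hper Hch.
    destruct (shadows_of_finite_shadows (fun _ => True) eps (periodic c p))
      as [z [_ Hz]]; [now intros|  |now exists z].
    intro N. apply NNPP. intro HN. apply Hm. exists (c, p, N).
    split; [exact Hp|split; [exact Hper|split; [exact Hch|]]].
    intro z. apply NNPP. intro Hz. apply HN. exists z. split; [exact I|].
    intros i Hi. apply Rnot_lt_le. intro Hlt. apply Hz. now exists i. }
  apply functional_choice in Hbad as [g Hg].
  exact (unshadowed_cycles_absurd eps (fun m => fst (fst (g m))) (fun m => snd (fst (g m)))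
           (fun m => snd (g m)) Heps Hg).
Qed.

Lemma orbit_closure_residue z p u : (1 <= p)%nat -> orbit_closure d f z u ->
  exists r, (r < p)%nat /\ closure d (fun y => exists j, y = Nat.iter (j * p + r) f z) u.
Proof.
  intros Hp Hu. apply NNPP. intro Hno.
  destruct (finite_uniform_lower_bound (fun r j => d u (Nat.iter (j * p + r) f z)) p)
    as [e [He Hbound]].
  { intros r Hr. apply NNPP. intro Hn. apply Hno. exists r. split; [exact Hr|].
    intros e He. apply NNPP. intro Hj. apply Hn. exists e. split; [exact He|].
    intro j. apply Rnot_lt_le. intro Hlt. apply Hj.
    exists (Nat.iter (j * p + r) f z). split; [now exists j|exact Hlt]. }
  destruct (Hu e He) as [y [[n ->] Hy]].
  pose proof (Nat.div_mod_eq n p). pose proof (Nat.mod_upper_bound n p ltac:(lia)).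
  specialize (Hbound (n mod p)%nat H0 (n / p)%nat). cbv beta in Hbound.
  replace (n / p * p + n mod p)%nat with n in Hbound by lia. lra.
Qed.

Lemma nonwandering_closure_minimal x : nonwandering d f x -> closure d (minimal_point d f) x.
Proof.
  intros Hnw eps Heps.
  destruct (cycle_shadowing (eps / 2)) as [delta [Hdelta Hshadow]]; [lra|].
  destruct (nonwandering_chain_recurrent x Hnw delta Hdelta) as [p [c [Hp [Hc0 [Hcp Hch]]]]].
  destruct (Hshadow c p Hp ltac:(congruence) Hch) as [z Hz].
  assert (Hret : forall j, d x (Nat.iter (j * p) f z) <= eps / 2).
  { intro j. rewrite <- Hc0 at 1. rewrite <- (periodic_at c p j 0), Nat.add_0_r by lia. apply Hz. }
  destruct (exists_minimal_subset _ (orbit_closure_nonempty_closed_invariant z))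
    as [M [HM [HMsub Hmin]]].
  destruct (proj1 HM) as [u Hu].
  destruct (orbit_closure_residue z p u Hp (HMsub u Hu)) as [r [Hr Hur]].
  exists (Nat.iter (p - r) f u). split.
  - apply (minimal_set_minimal_point M); [exact HM|exact Hmin|].
    apply invariant_iter; [apply HM|exact Hu].
  - enough (d x (Nat.iter (p - r) f u) <= eps / 2) by lra.
    eapply (closure_incl_closed d _ (fun y => d x (Nat.iter (p - r) f y) <= eps / 2) u);
      [apply (closed_dist_le_comp d Hmet), continuous_iter| |exact Hur].
    intros y [j ->]. cbv beta. rewrite <- Nat.iter_add.
    replace (p - r + (j * p + r))%nat with (S j * p)%nat by nia. apply Hret.
Qed.

(** * Shadowing on the non-wandering set *)

Lemma cluster_point_period_nonwandering z p w : (1 <= p)%nat ->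
  cluster_point d (fun j => Nat.iter (j * p) f z) w -> nonwandering d f w.
Proof.
  intros Hp Hw U HU Uw. destruct (HU w Uw) as [r [Hr Hball]].
  destruct (Hw r Hr 0%nat) as [j1 [_ Hj1]].
  destruct (Hw r Hr (S j1)) as [j2 [Hj2 Hj2']].
  exists ((j2 - j1) * p)%nat, (Nat.iter (j1 * p) f z). split; [nia|]. split.
  - apply Hball. now rewrite (dist_sym d Hmet).
  - rewrite <- Nat.iter_add. replace ((j2 - j1) * p + j1 * p)%nat with (j2 * p)%nat by nia.
    apply Hball. now rewrite (dist_sym d Hmet).
Qed.

Lemma nonwandering_cycle_shadow eps c p z : (1 <= p)%nat ->
  shadows d f eps (periodic c p) z ->
  exists w, nonwandering d f w /\ forall o, (o < p)%nat -> d (c o) (Nat.iter o f w) <= eps.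
Proof.
  intros Hp Hz.
  destruct (compact_cluster_point d Hmet Hcpt (fun j => Nat.iter (j * p) f z)) as [w Hw].
  exists w. split; [exact (cluster_point_period_nonwandering z p w Hp Hw)|].
  intros o Ho.
  apply (cluster_point_closed d Hmet _ _ w 0
           (closed_dist_le_comp d Hmet _ _ _ (continuous_iter o)) Hw).
  intros j _. cbv beta. rewrite <- Nat.iter_add, Nat.add_comm, <- (periodic_at c p j o Ho).
  apply Hz.
Qed.

Lemma chain_reach_nonwandering eta : 0 < eta -> exists delta, 0 < delta /\
  forall a b, nonwandering d f b -> d (f b) a <= delta -> chain_reach eta a b.
Proof.
  intros Heta.
  destruct (uniform_continuity d Hmet Hcpt f Hcont (eta / 2)) as [rho [Hrho Hunif]]; [lra|].
  exists (rho / 4). split; [lra|]. intros a b Hb Hab.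
  set (e := Rmin (eta / 2) (rho / 4)).
  assert (He : 0 < e /\ e <= eta / 2 /\ e <= rho / 4).
  { unfold e. split; [apply Rmin_glb_lt; lra|split; [apply Rmin_l|apply Rmin_r]]. }
  destruct (chain_recurrent_long_cycle b e (nonwandering_chain_recurrent b Hb) (proj1 He))
    as [k [c [Hk [Hc0 [Hck Hch]]]]].
  (* [a] is close to [f b], hence to [c 1]: it can replace [c 1] in the cycle *)
  assert (Hfa : d (f a) (f (c 1%nat)) < eta / 2).
  { apply Hunif. pose proof (Hch 0%nat ltac:(lia)). rewrite Hc0 in H.
    pose proof (dist_triangle d Hmet a (f b) (c 1%nat)).
    rewrite (dist_sym d Hmet a (f b)) in H0. lra. }
  exists (k - 1)%nat, (fun i => if i =? 0 then a else c (S i)). split; [reflexivity|]. split.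
  - cbv beta. replace (k - 1 =? 0) with false by (symmetry; apply Nat.eqb_neq; lia).
    now replace (S (k - 1)) with k by lia.
  - intros i Hi. cbv beta. destruct (i =? 0) eqn:E; simpl (S i =? 0); cbv iota.
    + apply Nat.eqb_eq in E. subst i. pose proof (Hch 1%nat ltac:(lia)).
      pose proof (dist_triangle d Hmet (f a) (f (c 1%nat)) (c 2%nat)). lra.
    + pose proof (Hch (S i) ltac:(lia)). lra.
Qed.

Lemma nonwandering_finite_shadowing eps : 0 < eps -> exists delta, 0 < delta /\
  forall xs, (forall i, nonwandering d f (xs i)) -> pseudo_orbit d f delta xs ->
    forall N, exists w, nonwandering d f w /\
      forall i, (i <= N)%nat -> d (xs i) (Nat.iter i f w) <= eps.
Proof.
  intros Heps. destruct (cycle_shadowing eps Heps) as [eta [Heta Hshadow]].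
  destruct (chain_reach_nonwandering eta Heta) as [delta [Hdelta Hback]].
  exists (Rmin eta delta). split; [now apply Rmin_glb_lt|]. intros xs Hxs Hpo N.
  assert (Hreach : forall n, chain_reach eta (xs n) (xs 0%nat)).
  { induction n as [|n IH]; [apply chain_reach_refl|].
    apply chain_reach_trans with (xs n); [|exact IH].
    apply Hback; [apply Hxs|]. eapply Rle_trans; [apply Hpo|apply Rmin_r]. }
  destruct (Hreach (S N)) as [k [back [Hb0 [Hbk Hbc]]]].
  set (c := append xs (S N) back). set (p := (S N + k)%nat).
  assert (Hc : chain eta c p).
  { apply chain_append; [|exact Hbc|congruence].
    intros i _. eapply Rle_trans; [apply Hpo|apply Rmin_l]. }
  assert (Hcp : c p = c 0%nat).
  { unfold c, p. rewrite append_right, append_left by (congruence || lia).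
    now replace (S N + k - S N)%nat with k by lia. }
  destruct (Hshadow c p ltac:(lia) Hcp Hc) as [z Hz].
  destruct (nonwandering_cycle_shadow eps c p z ltac:(lia) Hz) as [w [Hw Hwc]].
  exists w. split; [exact Hw|]. intros i Hi.
  rewrite <- (append_left xs (S N) back i) by lia. apply Hwc. lia.
Qed.

Lemma nonwandering_shadowing : shadowing_on d f (nonwandering d f).
Proof.
  intros eps Heps. destruct (nonwandering_finite_shadowing eps Heps) as [delta [Hdelta Hfin]].
  exists delta. split; [exact Hdelta|]. intros xs Hxs Hpo.
  apply shadows_of_finite_shadows; [exact closure_nonwandering|exact (Hfin xs Hxs Hpo)].
Qed.

End Dynamics.

Theorem theorem1p1 (X : Type) (d : X -> X -> R) (f : X -> X)
  (Hmet : is_metric d) (Hcpt : compact_space d) (Hcont : continuous_map d f)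
  (Hls : limit_shadowing d f) :
  (forall x, chain_recurrent d f x <-> nonwandering d f x) /\
  (forall x, nonwandering d f x <-> closure d (minimal_point d f) x) /\
  shadowing_on d f (nonwandering d f).
Proof.
  split; [|split].
  - intro x. split.
    + exact (chain_recurrent_nonwandering d f Hmet Hls x).
    + exact (nonwandering_chain_recurrent d f Hmet Hcont x).
  - intro x. split.
    + exact (nonwandering_closure_minimal d f Hmet Hcpt Hcont Hls x).
    + intro Hx. apply closure_nonwandering.
      apply (closure_mono d (minimal_point d f)); [|exact Hx].
      exact (minimal_point_nonwandering d f Hmet Hcont).
  - exact (nonwandering_shadowing d f Hmet Hcpt Hcont Hls).
Qed.
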